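(* Let $B_1,B_2$ be independent standard Brownian motions, $c_1,c_2\in\mathbb R$, $\gamma_1,\gamma_2\in[0,2)$, $a\le 1$. For $\varepsilon\in(0,1)$ let $A_\varepsilon=\{(t,s_1,s_2)\in[0,1]^3:\max(s_1,s_2)\le t\le\varepsilon\}$. Then for every $\delta>0$ there exists $\varepsilon=\varepsilon(\delta)\in(0,1)$ such that, as $u\to\infty$, $$\mathbb P\Big(\exists (t,s_1,s_2)\in A_\varepsilon:\ B_1(t)-c_1t-\gamma_1(B_1(s_1)-c_1s_1)>u,\ B_2(t)-c_2t-\gamma_2(B_2(s_2)-c_2s_2)>au\Big)=o\big(e^{-\delta u^2}\big).$$ *)

From HB Require Import structures.
From mathcomp Require Import all_boot all_order all_algebra.
From mathcomp Require Import all_classical all_reals all_analysis.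
From mathcomp Require Import normal_distribution.
Set Implicit Arguments. Unset Strict Implicit. Unset Printing Implicit Defensive.
Import Order.TTheory GRing.Theory Num.Theory.
Import numFieldNormedType.Exports.
Local Open Scope classical_set_scope.
Local Open Scope ring_scope.

Definition mutually_indep {R : realType} {d : measure_display}
  {T : measurableType d} (P : probability T R) (I : finType)
  (X : I -> T -> R) : Prop :=
  forall A : I -> set R, (forall i, measurable (A i)) ->
    P [set w | forall i, A i (X i w)] = (\prod_(i : I) P (X i @^-1` A i))%E.

(* (B1, B2) is a pair of independent standard Brownian motions on [0, +oo):
   each B_b(t) is a random variable, B_b(0) = 0, paths are continuous on
   [0, +oo), and for all times 0 = t_0 < t_1 < ... < t_n the 2n increments
   B_b(t_{k+1}) - B_b(t_k) (k < n, b = 1,2) are mutually independent,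
   with B_b(t_{k+1}) - B_b(t_k) ~ N(0, t_{k+1} - t_k). *)
Definition indep_std_BM_pair {R : realType} {d : measure_display}
  {T : measurableType d} (P : probability T R) (B1 B2 : R -> T -> R) : Prop :=
  let B := fun (b : bool) => if b then B2 else B1 in
  [/\ (forall b t, measurable_fun setT (B b t)),
      (forall b w, B b 0 w = 0),
      (forall b w, {within `[0, +oo[, continuous (fun t => B b t w)}) &
      (forall (n : nat) (t : nat -> R), t 0%N = 0 ->
         (forall k, (k < n)%N -> t k < t k.+1) ->
         let Y := fun (kb : 'I_n * bool) =>
           fun w => B kb.2 (t kb.1.+1) w - B kb.2 (t kb.1) w in
         mutually_indep P Y /\
         (forall kb A, measurable A ->
            P (Y kb @^-1` A) =
            normal_prob 0 (Num.sqrt (t kb.1.+1 - t kb.1)) A))].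

(* Only the first coordinate matters: on the event, g1 <= 2 and s1 <= t <= eps force
   sup_[0,eps] |B1| > u/4 as soon as u >= 12 |c1|.  That supremum is controlled by Levy's
   chaining on the dyadic grid of [0, eps]: if at every level n each of the 2^n increments
   is at most (u/16) (3/4)^n, then |B1| <= u/4 on the grid (the thresholds sum to u/4), hence
   on [0, eps] by continuity.  A level-n increment is N(0, eps 2^-n), so by the Gaussian
   tail and the union bound level n fails with probability at most
   2^n * 2 exp(-(9/8)^n u^2 / (1024 eps)) <= 2^-n * 2 exp(-u^2 / (1024 eps)).  Summing over n
   gives 4 exp(-u^2 / (1024 eps)), which is o(exp(-delta u^2)) once 1/(1024 eps) > 2 delta. *)

From HB Require Import structures.
From mathcomp Require Import all_boot all_order all_algebra.
From mathcomp Require Import all_classical all_reals all_analysis.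
From mathcomp Require Import normal_distribution measurable_realfun.
From mathcomp Require Import ring lra zify.
Import Order.TTheory GRing.Theory Num.Theory.
Import numFieldNormedType.Exports.
Local Open Scope classical_set_scope.
Local Open Scope ring_scope.
Set Implicit Arguments.
Unset Strict Implicit.

Lemma normal_peak_double (R : realType) (s : R) : 0 < s ->
  normal_peak s = 2 * normal_peak (2 * s).
Proof.
move=> s0; rewrite /normal_peak.
have -> : (2 * s) ^+ 2 * pi *+ 2 = 2 ^+ 2 * (s ^+ 2 * pi *+ 2) :> R by ring.
rewrite sqrtrM ?exprn_ge0 // sqrtr_sqr ger0_norm //.
by rewrite invfM mulrA divff ?mul1r.
Qed.

Lemma measurable_norm_gt (R : realType) (y : R) : measurable [set z : R | y < `|z|].
Proof.
have := @normr_measurable R setT measurableT `]y, +oo[%classic (measurable_itv _).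
by rewrite setTI; congr measurable; apply/seteqP; split => z /=; rewrite in_itv /= andbT.
Qed.

Lemma measurable_fun_gt d (T : measurableType d) (R : realType) (f : T -> R) (u : R) :
  measurable_fun setT f -> measurable [set w | u < f w].
Proof.
move=> mf; have := mf measurableT `]u, +oo[%classic (measurable_itv _).
by rewrite setTI; congr measurable; apply/seteqP; split => z /=; rewrite in_itv /= andbT.
Qed.

(* Splitting [exp (- x^2 / 2 s^2)] as [exp (- x^2 / 8 s^2) * exp (- 3 x^2 / 8 s^2)]
   trades half the standard deviation for the factor [exp (- y^2 / 4 s^2)]. *)
Lemma normal_pdf_tail_le (R : realType) (s y x : R) : 0 < s -> 0 <= y -> y < `|x| ->
  normal_pdf 0 s x <= 2 * expR (- (y ^+ 2 / (4 * s ^+ 2))) * normal_pdf 0 (2 * s) x.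
Proof.
move=> s0 y0 yx.
have s20 : 2 * s != 0 by rewrite mulf_neq0 ?gt_eqF.
rewrite /normal_pdf (negbTE s20) gt_eqF // normal_peak_double // /normal_fun !subr0.
rewrite -!mulrA ler_pM2l // mulrCA ler_pM2l ?normal_peak_gt0 //.
rewrite -expRD ler_expR.
have xy : y ^+ 2 <= x ^+ 2.
  by rewrite -[x ^+ 2](real_normK (num_real x)); have := normr_ge0 x; nra.
have sp : 0 < s ^+ 2 by rewrite exprn_gt0.
have -> : - x ^+ 2 / (s ^+ 2 *+ 2) = - (y ^+ 2 / (4 * s ^+ 2))
    + - x ^+ 2 / ((2 * s) ^+ 2 *+ 2) - (3 * x ^+ 2 - 2 * y ^+ 2) / (8 * s ^+ 2).
  by field; rewrite gt_eqF.
rewrite [in leRHS]mulrA -expr2 gerBl divr_ge0 //; last by rewrite mulr_ge0 // ltW.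
have := le_trans (sqr_ge0 y) xy; lra.
Qed.

Local Open Scope ereal_scope.
Lemma normal_prob_norm_gt_le (R : realType) (s y : R) : (0 < s)%R -> (0 <= y)%R ->
  normal_prob 0 s [set z | y < `|z|]%R <= (2 * expR (- (y ^+ 2 / (4 * s ^+ 2))))%:E.
Proof.
move=> s0 y0; rewrite /normal_prob.
set c := (2 * expR _)%R.
have c0 : (0 <= c)%R by rewrite mulr_ge0 ?expR_ge0.
have pdf0 r x : 0 <= (normal_pdf 0 r x)%:E :> \bar R by rewrite lee_fin normal_pdf_ge0.
apply: (@le_trans _ _ (\int[lebesgue_measure]_(x in [set z | y < `|z|]%R)
          (c%:E * (normal_pdf 0 (2 * s) x)%:E))).
  apply: ge0_le_integral => //; first exact: measurable_norm_gt.
  - apply/measurable_funTS/measurable_EFinP; exact: measurable_normal_pdf.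
  - apply/measurable_funTS/measurable_EFinP/measurable_funM => //.
    exact: measurable_normal_pdf.
  - by move=> x /= yx; rewrite -EFinM lee_fin normal_pdf_tail_le.
rewrite ge0_integralZl //; first last.
- apply/measurable_funTS/measurable_EFinP; exact: measurable_normal_pdf.
- exact: measurable_norm_gt.
rewrite -[leRHS]mule1 lee_wpmul2l ?lee_fin // -(integral_normal_pdf 0 (2 * s)).
apply: ge0_subset_integral => //; first exact: measurable_norm_gt.
by apply/measurable_EFinP; exact: measurable_normal_pdf.
Qed.

Lemma BM_increment_tail (R : realType) (d : measure_display) (T : measurableType d)
  (P : probability T R) (B1 B2 : R -> T -> R) (r s y : R) :
  indep_std_BM_pair P B1 B2 -> (0 <= r)%R -> (r < s)%R -> (0 <= y)%R ->
  P [set w | y < `|B1 s w - B1 r w|]%R <= (2 * expR (- (y ^+ 2 / (4 * (s - r)))))%:E.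
Proof.
move=> [_ _ _ incr] r0 rs y0.
have sr0 : (0 < s - r)%R by rewrite subr_gt0.
suff -> : P [set w | y < `|B1 s w - B1 r w|]%R =
          normal_prob 0 (Num.sqrt (s - r)) [set z | y < `|z|]%R.
  have sqrt_gt0 : (0 < Num.sqrt (s - r))%R by rewrite sqrtr_gt0.
  by have := normal_prob_norm_gt_le sqrt_gt0 y0; rewrite sqr_sqrtr // ltW.
have [r_eq0|r_neq0] := eqVneq r 0%R.
  subst r; have [|_] := incr 1%N (fun k => if k == 0%N then 0%R else s) erefl.
    by case.
  by move/(_ (ord0, false) _ (measurable_norm_gt y)).
have [|_] := incr 2%N (fun k => if k == 0%N then 0%R else if k == 1%N then r else s) erefl.
  by case=> [|[|]] //= _; rewrite lt0r r_neq0.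
by move/(_ (@Ordinal 2 1 isT, false) _ (measurable_norm_gt y)).
Qed.
Local Close Scope ereal_scope.

Definition dyadic (R : realType) (eps : R) (n k : nat) : R := eps * k%:R / 2 ^+ n.

Section dyadic_grid.
Variables (R : realType) (eps : R).
Hypothesis eps_gt0 : 0 < eps.

Lemma dyadic0 n : dyadic eps n 0 = 0.
Proof. by rewrite /dyadic mulr0 mul0r. Qed.

Lemma dyadic_double n k : dyadic eps n.+1 k.*2 = dyadic eps n k.
Proof. by rewrite /dyadic -muln2 natrM exprS; field; rewrite expf_neq0 // pnatr_eq0. Qed.

Lemma dyadic_ge0 n k : 0 <= dyadic eps n k.
Proof. by rewrite /dyadic divr_ge0 ?mulr_ge0 ?exprn_ge0 // ltW. Qed.

Lemma dyadicS_sub n k : dyadic eps n k.+1 - dyadic eps n k = eps / 2 ^+ n.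
Proof. by rewrite /dyadic -natr1; field; rewrite expf_neq0. Qed.

Lemma dyadic_le_mono n k1 k2 : (k1 <= k2)%N -> dyadic eps n k1 <= dyadic eps n k2.
Proof.
by move=> k12; rewrite /dyadic ler_pM2r ?invr_gt0 ?exprn_gt0 // ler_wpM2l ?ler_nat // ltW.
Qed.

Lemma dyadic_le n k : (k <= 2 ^ n)%N -> dyadic eps n k <= eps.
Proof.
move=> kn; rewrite /dyadic ler_pdivrMr ?exprn_gt0 // ler_wpM2l ?(ltW eps_gt0) //.
by rewrite -natrX ler_nat.
Qed.

Definition dyadic_floor n (t : R) : nat := Num.truncn (t * 2 ^+ n / eps).

Lemma dyadic_floor_le_mono n s t : 0 <= s -> s <= t -> (dyadic_floor n s <= dyadic_floor n t)%N.
Proof.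
move=> s0 st; apply: le_truncn.
by rewrite ler_pM2r ?invr_gt0 // ler_pM2r ?exprn_gt0.
Qed.

Lemma dyadic_floor_spec n t : 0 <= t -> t <= eps ->
  [/\ (dyadic_floor n t <= 2 ^ n)%N, dyadic eps n (dyadic_floor n t) <= t
    & t - dyadic eps n (dyadic_floor n t) < eps / 2 ^+ n].
Proof.
move=> t0 te; have p2 : (0 : R) < 2 ^+ n by rewrite exprn_gt0.
have /andP[k1 k2] := truncn_itv (divr_ge0 (mulr_ge0 t0 (ltW p2)) (ltW eps_gt0)).
rewrite /dyadic_floor; set k := Num.truncn _ in k1 k2 *; split.
- rewrite -(ler_nat R) natrX; apply: le_trans k1 _.
  by rewrite ler_pdivrMr // mulrC ler_wpM2l // ltW.
- by rewrite /dyadic ler_pdivrMr // mulrC -ler_pdivlMr.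
have -> : t - dyadic eps n k = (t * 2 ^+ n - k%:R * eps) / 2 ^+ n.
  by rewrite /dyadic; field; rewrite gt_eqF.
rewrite ltr_pM2r ?invr_gt0 // ltrBlDl.
by move: k2; rewrite ltr_pdivrMr // -[k.+1%:R]natr1 mulrDl mul1r.
Qed.

Lemma exists_dyadic_mesh_lt rho : 0 < rho -> exists n, eps / 2 ^+ n < rho.
Proof.
move=> rho0; exists (Num.truncn (eps / rho)).+1.
set n := (Num.truncn _).+1.
have n_le : (n%:R : R) <= 2 ^+ n by rewrite -natrX ler_nat ltnW // ltn_expl.
rewrite ltr_pdivrMr ?exprn_gt0 // mulrC -ltr_pdivrMr //.
exact: lt_le_trans (truncnS_gt _) n_le.
Qed.

End dyadic_grid.

Lemma within_continuous_ge0_dist (R : realType) (f : R -> R) x :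
  {within `[0, +oo[, continuous f} -> 0 <= x -> forall e, 0 < e ->
  exists2 d, 0 < d & forall y, 0 <= y -> `|y - x| < d -> `|f y - f x| < e.
Proof.
move=> cf x0 e e0.
have := proj1 (subspace_continuousP _ _) cf x.
rewrite /= in_itv /= andbT x0 => /(_ isT) /cvgrPdist_lt /(_ e e0).
rewrite near_withinE => /nbhs_ballP [d d0 near_x]; exists d => // y y0 yx.
have := near_x y; rewrite /ball /= distrC => /(_ yx).
by rewrite in_itv /= andbT y0 distrC; apply.
Qed.

Section chaining.
Variables (R : realType) (f : R -> R) (eps x : R).
Hypotheses (f0 : f 0 = 0) (f_cont : {within `[0, +oo[, continuous f}).
Hypotheses (eps_gt0 : 0 < eps) (x_ge0 : 0 <= x).

(* Levy's chaining: a point of level [n+1] is a point of level [n] or one increment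
   away from one. *)
Lemma dyadic_chaining :
  (forall n k, (k < 2 ^ n)%N ->
     `|f (dyadic eps n k.+1) - f (dyadic eps n k)| <= x * (3 / 4) ^+ n / 4) ->
  forall n k, (k <= 2 ^ n)%N -> `|f (dyadic eps n k)| <= x * (1 - (3 / 4) ^+ n.+1).
Proof.
move=> incr; elim=> [|n IH] k.
  rewrite expn0; case: k => [|[|//]] _.
    by rewrite dyadic0 f0 normr0 mulr_ge0 // subr_ge0 expr1; lra.
  have := incr 0%N 0%N isT; rewrite dyadic0 f0 subr0 expr0 expr1 mulr1.
  by move/le_trans; apply; lra.
move=> kn; have k_half := odd_double_half k.
have half_le : (k./2 <= 2 ^ n)%N.
  by rewrite leq_half_double; move: kn; rewrite expnS; lia.
have pow_ge0 : 0 <= (3 / 4) ^+ n.+1 :> R by rewrite exprn_ge0 //; lra.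
case: (odd k) k_half => /= k_half.
- rewrite add1n in k_half.
  have double_lt : (k./2.*2 < 2 ^ n.+1)%N by rewrite k_half.
  rewrite -k_half.
  have := incr n.+1 k./2.*2 double_lt; rewrite dyadic_double => step.
  have := IH _ half_le.
  have := ler_normD (f (dyadic eps n.+1 k./2.*2.+1) - f (dyadic eps n k./2))
                    (f (dyadic eps n k./2)).
  rewrite subrK => tri prev; apply: le_trans tri (le_trans (lerD step prev) _).
  by rewrite [X in _ <= x * (1 - X)]exprS; nra.
- rewrite add0n in k_half; rewrite -k_half dyadic_double.
  apply: le_trans (IH _ half_le) _.
  by rewrite ler_wpM2l // lerB // [X in X <= _]exprS; lra.
Qed.

Lemma bound_of_dyadic_bound :
  (forall n k, (k <= 2 ^ n)%N -> `|f (dyadic eps n k)| <= x) ->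
  forall t, 0 <= t <= eps -> `|f t| <= x.
Proof.
move=> grid t /andP[t0 te]; rewrite leNgt; apply/negP => lt_ft.
have gap : 0 < `|f t| - x by rewrite subr_gt0.
have [d d0 near_t] := within_continuous_ge0_dist f_cont t0 gap.
have [n mesh] := exists_dyadic_mesh_lt eps d0.
have [kn kt tk] := dyadic_floor_spec eps_gt0 n t0 te.
set k := dyadic_floor eps n t in kn kt tk.
have := near_t _ (dyadic_ge0 eps_gt0 n k).
rewrite distrC ger0_norm ?subr_ge0 // => /(_ (lt_trans tk mesh)).
have := grid n k kn.
have := ler_normD (f t - f (dyadic eps n k)) (f (dyadic eps n k)); rewrite subrK.
by rewrite distrC; lra.
Qed.

Lemma bound_of_dyadic_increments :
  (forall n k, (k < 2 ^ n)%N ->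
     `|f (dyadic eps n k.+1) - f (dyadic eps n k)| <= x * (3 / 4) ^+ n / 4) ->
  forall t, 0 <= t <= eps -> `|f t| <= x.
Proof.
move=> incr; apply: bound_of_dyadic_bound => n k kn.
apply: le_trans (dyadic_chaining incr kn) _.
by rewrite ler_piMr // lerBlDr lerDl exprn_ge0 //; lra.
Qed.

End chaining.

Lemma drift_gt_near (R : realType) (f : R -> R) (c g v t s : R) :
  {within `[0, +oo[, continuous f} -> 0 <= t -> 0 <= s ->
  v < f t - c * t - g * (f s - c * s) ->
  exists2 rho, 0 < rho & forall t' s', 0 <= t' -> 0 <= s' ->
    `|t' - t| < rho -> `|s' - s| < rho -> v < f t' - c * t' - g * (f s' - c * s').
Proof.
move=> f_cont t0 s0 gap.
pose h z := f z - c * z.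
have h_cont : {within `[0, +oo[, continuous h}.
  exact: within_continuousB f_cont (continuous_subspaceT (@mulrl_continuous _ c)).
pose e := (f t - c * t - g * (f s - c * s) - v) / (2 * (1 + `|g|)).
have normg1_gt0 : 0 < 1 + `|g| by rewrite ltr_pwDl.
have e0 : 0 < e by rewrite divr_gt0 ?subr_gt0 // mulr_gt0.
have e_gap : 2 * e * (1 + `|g|) = f t - c * t - g * (f s - c * s) - v.
  by rewrite /e; field; rewrite gt_eqF.
have [dt dt0 near_t] := within_continuous_ge0_dist h_cont t0 e0.
have [ds ds0 near_s] := within_continuous_ge0_dist h_cont s0 e0.
exists (Num.min dt ds) => [|t' s' t'0 s'0]; first by rewrite lt_min dt0 ds0.
rewrite !lt_min => /andP[/(near_t _ t'0) ht _] /andP[_ /(near_s _ s'0) hs].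
have gs : `|g * (h s' - h s)| <= `|g| * e by rewrite normrM ler_wpM2l // ltW.
move: ht gs; rewrite /h !ltr_norml !ler_norml => /andP[ht1 _] /andP[_ gs2].
have := normr_ge0 g; nra.
Qed.

Lemma corner_dyadic_witness (R : realType) (f1 f2 : R -> R) (c1 c2 g1 g2 v1 v2 eps t s1 s2 : R) :
  0 < eps -> {within `[0, +oo[, continuous f1} -> {within `[0, +oo[, continuous f2} ->
  0 <= s1 <= t -> 0 <= s2 <= t -> t <= eps ->
  v1 < f1 t - c1 * t - g1 * (f1 s1 - c1 * s1) ->
  v2 < f2 t - c2 * t - g2 * (f2 s2 - c2 * s2) ->
  let p := dyadic eps in
  exists n k0 k1 k2, [/\ (k1 <= k0)%N, (k2 <= k0)%N, (k0 <= 2 ^ n)%N,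
    v1 < f1 (p n k0) - c1 * p n k0 - g1 * (f1 (p n k1) - c1 * p n k1) &
    v2 < f2 (p n k0) - c2 * p n k0 - g2 * (f2 (p n k2) - c2 * p n k2)].
Proof.
move=> eps0 f1_cont f2_cont /andP[s10 s1t] /andP[s20 s2t] te gap1 gap2 p.
have t0 := le_trans s10 s1t.
have [r1 r10 near1] := drift_gt_near f1_cont t0 s10 gap1.
have [r2 r20 near2] := drift_gt_near f2_cont t0 s20 gap2.
have r0 : 0 < Num.min r1 r2 by rewrite lt_min r10 r20.
have [n mesh] := exists_dyadic_mesh_lt eps r0.
pose k z := dyadic_floor eps n z.
have close z : 0 <= z -> z <= eps -> `|p n (k z) - z| < Num.min r1 r2.
  move=> z0 ze; have [_ kz zk] := dyadic_floor_spec eps0 n z0 ze.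
  by rewrite distrC ger0_norm ?subr_ge0 // (lt_trans zk mesh).
have [kn _ _] := dyadic_floor_spec eps0 n t0 te.
move: (close t t0 te) (close s1 s10 (le_trans s1t te)) (close s2 s20 (le_trans s2t te)).
rewrite !lt_min => /andP[ct1 ct2] /andP[cs1 _] /andP[_ cs2].
exists n, (k t), (k s1), (k s2); split => //.
- exact: dyadic_floor_le_mono.
- exact: dyadic_floor_le_mono.
- exact: near1 (dyadic_ge0 eps0 _ _) (dyadic_ge0 eps0 _ _) ct1 cs1.
- exact: near2 (dyadic_ge0 eps0 _ _) (dyadic_ge0 eps0 _ _) ct2 cs2.
Qed.

Definition corner_event (R : realType) (T : Type) (B1 B2 : R -> T -> R)
  (c1 c2 g1 g2 a eps u : R) : set T :=
  [set w | exists t s1 s2 : R,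
    [/\ 0 <= t <= 1, 0 <= s1 <= 1, 0 <= s2 <= 1, Num.max s1 s2 <= t & t <= eps] /\
    B1 t w - c1 * t - g1 * (B1 s1 w - c1 * s1) > u /\
    B2 t w - c2 * t - g2 * (B2 s2 w - c2 * s2) > a * u].

Lemma measurable_fun_drift d (T : measurableType d) (R : realType) (B : R -> T -> R)
  (c g t s : R) : (forall t, measurable_fun setT (B t)) ->
  measurable_fun setT (fun w => B t w - c * t - g * (B s w - c * s)).
Proof.
move=> mB; apply: measurable_funB; first by apply: measurable_funB.
by apply: measurable_funM => //; apply: measurable_funB.
Qed.

(* By continuity of the paths the event is a countable union over dyadic triples. *)
Lemma measurable_corner_event d (T : measurableType d) (R : realType) (B1 B2 : R -> T -> R)
  (c1 c2 g1 g2 a eps u : R) :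
  (forall t, measurable_fun setT (B1 t)) -> (forall t, measurable_fun setT (B2 t)) ->
  (forall w, {within `[0, +oo[, continuous (fun t => B1 t w)}) ->
  (forall w, {within `[0, +oo[, continuous (fun t => B2 t w)}) ->
  0 < eps -> eps <= 1 -> measurable (corner_event B1 B2 c1 c2 g1 g2 a eps u).
Proof.
move=> mB1 mB2 B1_cont B2_cont eps0 eps1.
pose p := dyadic eps.
pose G n k0 k1 k2 := if [&& (k1 <= k0)%N, (k2 <= k0)%N & (k0 <= 2 ^ n)%N] then
  [set w | u < B1 (p n k0) w - c1 * p n k0 - g1 * (B1 (p n k1) w - c1 * p n k1)] `&`
  [set w | a * u < B2 (p n k0) w - c2 * p n k0 - g2 * (B2 (p n k2) w - c2 * p n k2)]
  else set0.
suff -> : corner_event B1 B2 c1 c2 g1 g2 a eps u =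
          \bigcup_n \bigcup_k0 \bigcup_k1 \bigcup_k2 G n k0 k1 k2.
  do 4 apply: bigcupT_measurable => ?; rewrite /G; case: ifP => // _.
  by apply: measurableI; apply: measurable_fun_gt; apply: measurable_fun_drift.
apply/seteqP; split => w.
- move=> [t [s1 [s2 [[_ /andP[s10 _] /andP[s20 _] +] te] [gap1 gap2]]]].
  rewrite ge_max => /andP[s1t s2t].
  have [s1_in s2_in] : 0 <= s1 <= t /\ 0 <= s2 <= t by rewrite s10 s1t s20 s2t.
  have [n [k0 [k1 [k2 [k10 k20 k0n gap1' gap2']]]]] :=
    corner_dyadic_witness eps0 (B1_cont w) (B2_cont w) s1_in s2_in te gap1 gap2.
  by exists n => //; exists k0 => //; exists k1 => //; exists k2 => //; rewrite /G k10 k20 k0n.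
- move=> [n _ [k0 _ [k1 _ [k2 _]]]]; rewrite /G.
  case: ifP => // /and3P[k10 k20 k0n] [gap1 gap2].
  exists (p n k0), (p n k1), (p n k2); split => //.
  have le1 k : (k <= 2 ^ n)%N -> p n k <= 1.
    by move=> kn; apply: le_trans (dyadic_le eps0 kn) eps1.
  have [k1n k2n] := (leq_trans k10 k0n, leq_trans k20 k0n).
  rewrite !dyadic_ge0 // !le1 // ge_max !dyadic_le_mono //; split => //.
  exact: dyadic_le.
Qed.

Lemma drift_le_of_norm_le (R : realType) (bt bs c g t s u : R) :
  0 <= g <= 2 -> 0 <= s <= 1 -> 0 <= t <= 1 -> `|bt| <= u / 4 -> `|bs| <= u / 4 ->
  12 * `|c| <= u -> bt - c * t - g * (bs - c * s) <= u.
Proof.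
move=> /andP[g0 g2] /andP[s0 s1] /andP[t0 t1].
rewrite !ler_norml => /andP[bt1 bt2] /andP[bs1 bs2] cu.
have ct : `|c * t| <= `|c| by rewrite normrM (ger0_norm t0) ler_piMr.
have cs : `|c * s| <= `|c| by rewrite normrM (ger0_norm s0) ler_piMr.
move: ct cs; rewrite !ler_norml => /andP[ct1 ct2] /andP[cs1 cs2].
have := normr_ge0 c; nra.
Qed.

Lemma ler1Dn_exprD (R : realDomainType) (x : R) n : 0 <= x -> 1 + n%:R * x <= (1 + x) ^+ n.
Proof.
move=> x0; elim: n => [|n IH]; first by rewrite mul0r addr0.
rewrite exprS -natr1; have : 1 <= (1 + x) ^+ n by apply: le_trans IH; rewrite lerDl mulr_ge0.
move: IH; set y := (1 + x) ^+ n; nra.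
Qed.

(* [(9/8)^n >= 1 + n/8] makes the level-[n] tail beat the [2^n] increments of that level. *)
Lemma dyadic_level_tail_le (R : realType) (A : R) n : 24 <= A ->
  2 ^+ n * (2 * expR (- (A * (9 / 8) ^+ n))) <= 2 * expR (- A) * (1 / 2) ^+ n.
Proof.
move=> A24; pose E := expR (A / 8).
have E4 : 4 <= E by apply: le_trans (expR_ge1Dx _); lra.
have E0 : 0 < E by rewrite expR_gt0.
have tail : expR (- (A * (9 / 8) ^+ n)) <= expR (- A) / E ^+ n.
  rewrite /E -expRM_natl -expRN -expRD ler_expR.
  have := @ler1Dn_exprD R (1 / 8) n; rewrite (_ : 1 + 1 / 8 = 9 / 8); nra.
apply: le_trans (ler_wpM2l _ (ler_wpM2l _ tail)) _; rewrite ?exprn_ge0 //.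
have -> : 2 ^+ n * (2 * (expR (- A) / E ^+ n)) = 2 * expR (- A) * (2 / E) ^+ n.
  by rewrite exprMn exprVn; field; rewrite expf_neq0 // gt_eqF.
rewrite ler_pM2l ?mulr_gt0 ?expR_gt0 //.
apply: lerXn2r; rewrite ?nnegrE ?divr_ge0 //; first exact: ltW.
by rewrite ler_pdivrMr // mulrC mulrA mulr1 ler_pdivlMr //; lra.
Qed.

Lemma sum_geometric_half_le (R : realType) (c : R) N : 0 <= c ->
  \sum_(n < N) c * (1 / 2) ^+ n <= 2 * c.
Proof.
move=> c0; have -> : \sum_(n < N) c * (1 / 2) ^+ n = 2 * c - 2 * c * (1 / 2) ^+ N.
  elim: N => [|N IH]; first by rewrite big_ord0 expr0; ring.
  by rewrite big_ord_recr /= IH exprS; field.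
by rewrite gerBl mulr_ge0 ?exprn_ge0 //; lra.
Qed.

Local Open Scope ereal_scope.
Lemma nneseries_le_geometric_half (R : realType) (v : nat -> \bar R) (c : R) : (0 <= c)%R ->
  (forall n, 0 <= v n) -> (forall n, v n <= (c * (1 / 2) ^+ n)%:E) ->
  \sum_(n <oo) v n <= (2 * c)%:E.
Proof.
move=> c0 v0 vc; apply: lime_le; first exact: is_cvg_nneseries.
apply: nearW => N; apply: le_trans (_ : \sum_(0 <= n < N) (c * (1 / 2) ^+ n)%:E <= _).
  by apply: lee_sum => n _.
by rewrite sumEFin lee_fin big_mkord; exact: sum_geometric_half_le.
Qed.
Local Close Scope ereal_scope.

Lemma expR_decay_le (R : realType) (A y eta : R) : 0 < eta -> 0 <= y -> 2 * y <= A ->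
  4 / eta <= y -> 4 * expR (- A) <= eta * expR (- y).
Proof.
move=> eta0 y0 yA ye.
have h1 : expR (- A) <= expR (- y) * expR (- y) by rewrite -expRD ler_expR; lra.
have h2 : expR (- y) * (1 + y) <= 1.
  have := expR_ge1Dx y; have := expR_gt0 (- y).
  have : expR (- y) * expR y = 1 by rewrite -expRD addNr expR0.
  nra.
have h3 : 4 <= eta * (1 + y) by move: ye; rewrite ler_pdivrMr //; lra.
have := expR_gt0 (- y); have := expR_gt0 (- A); nra.
Qed.

Definition large_increment (R : realType) (T : Type) (B : R -> T -> R) (eps x : R)
  (n k : nat) : set T :=
  [set w | x * (3 / 4) ^+ n / 4 < `|B (dyadic eps n k.+1) w - B (dyadic eps n k) w|].

Lemma measurable_large_increment d (T : measurableType d) (R : realType) (B : R -> T -> R)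
  (eps x : R) n k : (forall t, measurable_fun setT (B t)) ->
  measurable (large_increment B eps x n k).
Proof.
move=> mB; apply: measurable_fun_gt.
by apply: measurableT_comp => //; apply: measurable_funB.
Qed.

Lemma corner_event_sub_large_increments (R : realType) (T : Type) (B1 B2 : R -> T -> R)
  (c1 c2 g1 g2 a eps u : R) :
  (forall w, B1 0 w = 0) -> (forall w, {within `[0, +oo[, continuous (fun t => B1 t w)}) ->
  0 <= g1 <= 2 -> 0 < eps -> 12 * `|c1| <= u ->
  corner_event B1 B2 c1 c2 g1 g2 a eps u `<=`
  \bigcup_n \big[setU/set0]_(k < 2 ^ n) large_increment B1 eps (u / 4) n k.
Proof.
move=> B10 B1_cont g1_in eps0 cu w [t [s1 [s2 [[t_in s1_in _ + te] [gap1 _]]]]].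
rewrite ge_max => /andP[s1t _]; apply: contrapT => no_large.
have small n k : (k < 2 ^ n)%N ->
    `|B1 (dyadic eps n k.+1) w - B1 (dyadic eps n k) w| <= u / 4 * (3 / 4) ^+ n / 4.
  move=> kn; rewrite leNgt; apply/negP => large; apply: no_large.
  by exists n => //; rewrite -bigcup_mkord; exists k.
have u4 : 0 <= u / 4 by have := normr_ge0 c1; lra.
have bound := bound_of_dyadic_increments (B10 w) (B1_cont w) eps0 u4 small.
move: (t_in) (s1_in) => /andP[t0 _] /andP[s10 _].
have := drift_le_of_norm_le g1_in s1_in t_in (bound t _) (bound s1 _) cu.
by rewrite t0 te s10 (le_trans s1t te) leNgt gap1 => /(_ isT isT).
Qed.

Local Open Scope ereal_scope.
Lemma prob_large_increments_le (R : realType) (d : measure_display) (T : measurableType d)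
  (P : probability T R) (B1 B2 : R -> T -> R) (eps x : R) n :
  indep_std_BM_pair P B1 B2 -> (0 < eps)%R -> (0 <= x)%R -> (24 <= x ^+ 2 / (64 * eps))%R ->
  P (\big[setU/set0]_(k < 2 ^ n) large_increment B1 eps x n k)
  <= (2 * expR (- (x ^+ 2 / (64 * eps))) * (1 / 2) ^+ n)%:E.
Proof.
move=> hB eps0 x0 A24; set A := (x ^+ 2 / (64 * eps))%R.
have mE k : measurable (large_increment B1 eps x n k).
  by case: hB => mB _ _ _; apply: measurable_large_increment; exact: mB false.
apply: le_trans (@content_subadditive _ R T P _ _ (2 ^ n)%N _ _ _) _.
- by move=> k _; exact: mE.
- by apply: bigsetU_measurable => k _; exact: mE.
- by [].
apply: le_trans (_ : \sum_(k < 2 ^ n) (2 * expR (- (A * (9 / 8) ^+ n)))%:E <= _).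
  apply: lee_sum => k _.
  have p2 : (0 < 2 ^+ n :> R)%R by rewrite exprn_gt0.
  have thr0 : (0 <= x * (3 / 4) ^+ n / 4 :> R)%R by rewrite divr_ge0 ?mulr_ge0 ?exprn_ge0 //; lra.
  have lt_k : (dyadic eps n k < dyadic eps n k.+1)%R.
    by rewrite -subr_gt0 dyadicS_sub // divr_gt0.
  have := BM_increment_tail hB (dyadic_ge0 eps0 n k) lt_k thr0.
  rewrite dyadicS_sub //.
  have -> : ((x * (3 / 4) ^+ n / 4) ^+ 2 / (4 * (eps / 2 ^+ n)) = A * (9 / 8) ^+ n)%R.
    have -> : ((9 / 8 : R) ^+ n = ((3 / 4) ^+ n) ^+ 2 * 2 ^+ n)%R.
      by rewrite -exprM mulnC exprM -exprMn; congr (_ ^+ _)%R; field.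
    by rewrite /A; field; rewrite gt_eqF // expf_neq0.
  exact.
rewrite sumEFin lee_fin sumr_const card_ord -[(_ *+ (2 ^ n)%N)%R]mulr_natl natrX.
exact: dyadic_level_tail_le.
Qed.

Lemma corner_event_tail (R : realType) (d : measure_display) (T : measurableType d)
  (P : probability T R) (B1 B2 : R -> T -> R) (c1 c2 g1 g2 a eps u : R) :
  indep_std_BM_pair P B1 B2 -> (0 <= g1 <= 2)%R -> (0 < eps)%R -> (eps <= 1)%R ->
  (12 * `|c1| <= u)%R -> (24 * 1024 * eps <= u ^+ 2)%R ->
  P (corner_event B1 B2 c1 c2 g1 g2 a eps u)
  <= (4 * expR (- (u ^+ 2 / (1024 * eps))))%:E.
Proof.
move=> hB g1_in eps0 eps1 cu u_large; have [mB B0 B_cont _] := hB.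
have u4 : (0 <= u / 4)%R by have := normr_ge0 c1; lra.
have A_eq : ((u / 4) ^+ 2 / (64 * eps) = u ^+ 2 / (1024 * eps))%R.
  by field; rewrite gt_eqF.
have mF n : measurable (\big[setU/set0]_(k < 2 ^ n) large_increment B1 eps (u / 4) n k).
  by apply: bigsetU_measurable => k _; apply: measurable_large_increment; exact: mB false.
have sub := corner_event_sub_large_increments (B2 := B2) (c2 := c2) (g2 := g2) (a := a)
  (B0 false) (B_cont false) g1_in eps0 cu.
have m_event := measurable_corner_event c1 c2 g1 g2 a u (mB false) (mB true) (B_cont false)
  (B_cont true) eps0 eps1.
have level_large : (24 <= (u / 4) ^+ 2 / (64 * eps))%R.
  by rewrite A_eq ler_pdivlMr; lra.
have c0 : (0 <= 2 * expR (- ((u / 4) ^+ 2 / (64 * eps))))%R by rewrite mulr_ge0 ?expR_ge0.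
apply: le_trans (measure_sigma_subadditive P mF m_event sub) _.
apply: le_trans (nneseries_le_geometric_half c0 (fun n => measure_ge0 _ _)
  (fun n => prob_large_increments_le n hB eps0 u4 level_large)) _.
by rewrite A_eq lee_fin mulrA -natrM.
Qed.
Local Close Scope ereal_scope.

Theorem lemma3p2 (R : realType) (d : measure_display) (T : measurableType d)
  (P : probability T R) (B1 B2 : R -> T -> R)
  (hB : indep_std_BM_pair P B1 B2)
  (c1 c2 g1 g2 a : R)
  (hg1 : 0 <= g1 < 2) (hg2 : 0 <= g2 < 2) (ha : a <= 1) :
  forall delta : R, 0 < delta ->
  exists eps : R, 0 < eps < 1 /\
    forall eta : R, 0 < eta -> exists U : R, forall u : R, U < u ->
      (P [set w | (exists t s1 s2 : R,
           [/\ 0 <= t <= 1, 0 <= s1 <= 1, 0 <= s2 <= 1,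
               Num.max s1 s2 <= t & t <= eps] /\
           B1 t w - c1 * t - g1 * (B1 s1 w - c1 * s1) > u /\
           B2 t w - c2 * t - g2 * (B2 s2 w - c2 * s2) > a * u)%R]
      <= (eta * expR (- (delta * u ^+ 2)))%:E)%E.
Proof.
move=> delta delta0; pose eps := 1 / (2048 * delta + 2).
have D0 : 0 < 2048 * delta + 2 by lra.
have eps0 : 0 < eps := divr_gt0 ltr01 D0.
have eps1 : eps < 1 by rewrite ltr_pdivrMr; lra.
exists eps; split; first by rewrite eps0 eps1.
move=> eta eta0; exists (12 * `|c1| + 25 * 1024 + 4 / (eta * delta)) => u uU.
have inv_eta : 0 <= 4 / (eta * delta) by rewrite divr_ge0 ?mulr_ge0 ?ler0n ?ltW.
have u1 : 1 <= u by have := normr_ge0 c1; lra.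
have u_sqr : u <= u ^+ 2 by rewrite expr2 ler_peMl; lra.
have g1_in : 0 <= g1 <= 2 by case/andP: hg1 => -> /ltW.
have rate : u ^+ 2 / (1024 * eps) = 2 * (delta * u ^+ 2) + u ^+ 2 / 512.
  by rewrite /eps; field; lra.
have cu : 12 * `|c1| <= u by have := normr_ge0 c1; lra.
have u_large : 24 * 1024 * eps <= u ^+ 2 by have := normr_ge0 c1; nra.
apply: le_trans (corner_event_tail c2 g2 a hB g1_in eps0 (ltW eps1) cu u_large) _.
rewrite lee_fin; apply: expR_decay_le.
- exact: eta0.
- by rewrite mulr_ge0 ?sqr_ge0 ?ltW.
- by rewrite rate; have := sqr_ge0 u; lra.
have -> : 4 / eta = delta * (4 / (eta * delta)) by field; rewrite !gt_eqF.
by rewrite ler_wpM2l ?(ltW delta0); have := normr_ge0 c1; nra.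
Qed.
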